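(* Let $(p,q)=(6/5,6)$. Then for every $x \in [0,\pi_{6/5,6}/4]$, \[ \sin_{6/5,6}{(2x)} =\frac{2^{1/6}\sin_{6/5,6}{x}\,\cos_{6/5,6}^{1/5}{x}\left(3+\sqrt{1+32\sin_{6/5,6}^6{x}\, \cos_{6/5,6}^{6/5}{x}}\right)^{1/2}}{\left(1+32\sin_{6/5,6}^6{x}\,\cos_{6/5,6}^{6/5}{x}\right)^{1/4} \left(1+\sqrt{1+32\sin_{6/5,6}^6{x}\,\cos_{6/5,6}^{6/5}{x}}\right)^{1/6}}. \]
   Context: For $1<p,q<\infty$ let $F_{p,q}(x)=\int_0^x (1-t^q)^{-1/p}\,dt$ for $x\in[0,1]$, and $\pi_{p,q}=2F_{p,q}(1)$. The generalized sine $\sin_{p,q}$ is defined on $[0,\pi_{p,q}/2]$ as the inverse function of $F_{p,q}$ (an increasing function onto $[0,1]$), extended to $(\pi_{p,q}/2,\pi_{p,q}]$ by $\sin_{p,q}x=\sin_{p,q}(\pi_{p,q}-x)$, and to all of $\mathbb{R}$ as an odd $2\pi_{p,q}$-periodic function. It is $C^1$, and the generalized cosine is $\cos_{p,q}x := \frac{d}{dx}\sin_{p,q}x$; it satisfies $|\cos_{p,q}x|^p+|\sin_{p,q}x|^q=1$, and $\cos_{p,q}x\ge 0$ on $[0,\pi_{p,q}/2]$. *)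

From Stdlib Require Import Reals ClassicalEpsilon.
From Coquelicot Require Import Coquelicot.
Open Scope R_scope.

(* t^q for t >= 0 (with 0^q = 0, q > 0); only used for t in [0,1]. *)
Definition rpow (t a : R) : R := if Rlt_dec 0 t then Rpower t a else 0.

Definition integrand_pq (p q : R) (t : R) : R :=
  Rpower (1 - rpow t q) (- / p).

Definition pi_pq (p q : R) : R :=
  2 * RInt_gen (integrand_pq p q) (at_point 0) (at_left 1).

Definition F_pq (p q : R) (x : R) : R :=
  if Rlt_dec x 1 then RInt (integrand_pq p q) 0 x else pi_pq p q / 2.

Definition sin0_pq (p q : R) (y : R) : R :=
  epsilon (inhabits 0) (fun x => 0 <= x <= 1 /\ F_pq p q x = y).

(* sin_{p,q} on all of R: symmetric about pi/2 on [0,pi], odd, 2pi-periodic *)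
Definition sin_pq (p q : R) (y : R) : R :=
  let P := pi_pq p q in
  let r := y - 2 * P * IZR (Int_part ((y + P) / (2 * P))) in  (* r in [-P, P) *)
  let s := fun u => if Rle_dec u (P / 2) then sin0_pq p q u
                    else sin0_pq p q (P - u) in
  if Rlt_dec r 0 then - s (- r) else s r.

Definition cos_pq (p q : R) (x : R) : R := Derive (sin_pq p q) x.

From Stdlib Require Import Reals Lra ClassicalEpsilon.
From Coquelicot Require Import Coquelicot.
Open Scope R_scope.

(* Write F for F_{6/5,6} and let r = 2^(-1/6).  An explicit algebraic map [doubling] with
   doubling r = 1 satisfies F (doubling t) = 2 F t on [0, r]: both sides vanish at 0 and have
   the same derivative, because doubling^6 is a rational function H of
   w = sqrt (1 + 32 t^6 (1 - t^6)) whose derivative and whose product H (1 - H) are, up to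
   elementary factors, a fifth and a sixth power of the same quantity.  Letting t tend to r shows
   that the improper integral defining pi_{6/5,6} converges to 2 F r, so pi_{6/5,6} / 4 = F r.
   Hence for x in [0, pi_{6/5,6} / 4] and y = sin x we get F (doubling y) = 2 x, that is
   sin (2 x) = doubling y, and cos x = (1 - y^6)^(5/6) turns doubling y into the stated
   radical expression. *)

Lemma Rpower_1_l (a : R) : Rpower 1 a = 1.
Proof. unfold Rpower. rewrite ln_1, Rmult_0_r. apply exp_0. Qed.

Lemma Rpower_lt_1 (a c : R) : 0 < a < 1 -> 0 < c -> Rpower a c < 1.
Proof.
  intros Ha Hc. apply Rlt_le_trans with (Rpower 1 c).
  - apply Rlt_Rpower_l; lra.
  - rewrite Rpower_1_l. lra.
Qed.

Lemma pow_lt_compat (x y : R) (n : nat) : 0 <= x < y -> (0 < n)%nat -> x ^ n < y ^ n.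
Proof.
  intros Hxy Hn. induction n as [|[|n] IH]; [inversion Hn | simpl; lra |].
  assert (x ^ S n < y ^ S n) by (apply IH; auto with arith).
  assert (0 <= x ^ S n) by (apply pow_le; lra).
  change (x * x ^ S n < y * y ^ S n). nra.
Qed.

Lemma constant_of_is_derive_0 (f : R -> R) (a b : R) : a <= b ->
  (forall t, a < t < b -> is_derive f t 0) ->
  (forall t, a <= t <= b -> continuity_pt f t) -> f b = f a.
Proof.
  intros Hab Hd Hc.
  destruct (MVT_gen f a b (fun _ => 0)) as [c [_ Hf]];
    rewrite ?Rmin_left, ?Rmax_right by lra; auto; lra.
Qed.

Lemma IVT_interv_le (g : R -> R) (a b y : R) : a <= b ->
  (forall t, a <= t <= b -> continuity_pt g t) -> g a <= y <= g b ->
  exists x, a <= x <= b /\ g x = y.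
Proof.
  intros Hab Hg Hy.
  destruct (Req_dec y (g a)) as [-> | Ha]; [exists a; split; [lra | reflexivity] |].
  destruct (Req_dec y (g b)) as [-> | Hb]; [exists b; split; [lra | reflexivity] |].
  destruct (Ranalysis5.IVT_interv (fun t => g t - y) a b) as [x [Hx E]].
  - intros t Ht. apply continuity_pt_minus; [apply Hg, Ht | apply continuity_pt_const].
    intros u v. reflexivity.
  - destruct (Req_dec a b) as [-> |]; lra.
  - lra.
  - lra.
  - exists x. split; [exact Hx | simpl in E; lra].
Qed.

Lemma RInt_le_RInt_upper (f : R -> R) (a x y : R) : a <= x <= y ->
  ex_RInt f a y -> (forall t, x < t < y -> 0 <= f t) -> RInt f a x <= RInt f a y.
Proof.
  intros Hxy Hy Hf.
  assert (Hx : ex_RInt f a x)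
    by (apply (ex_RInt_Chasles_1 (V := R_CompleteNormedModule)) with y; [lra | exact Hy]).
  assert (Hxy' : ex_RInt f x y)
    by (apply (ex_RInt_Chasles_2 (V := R_CompleteNormedModule)) with a; [lra | exact Hy]).
  rewrite <- (RInt_Chasles (V := R_CompleteNormedModule) f a x y Hx Hxy').
  pose proof (RInt_ge_0 f x y ltac:(lra) Hxy' Hf).
  change (RInt f a x <= RInt f a x + RInt f x y). lra.
Qed.

Lemma is_RInt_gen_at_left_of_sup (f : R -> R) (a b L : R) :
  (forall x, a <= x < b -> ex_RInt f a x) ->
  (forall t, a < t < b -> 0 <= f t) ->
  (forall x, a <= x < b -> RInt f a x <= L) ->
  (forall eps : posreal, exists x, a <= x < b /\ L - eps < RInt f a x) ->
  is_RInt_gen f (at_point a) (at_left b) L.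
Proof.
  intros Hex Hpos Hub Hsup P [eps HP].
  destruct (Hsup eps) as [x0 [Hx0 Hlow]].
  apply Filter_prod with (Q := fun u => u = a) (R := fun v => x0 < v < b).
  - reflexivity.
  - exists (mkposreal (b - x0) ltac:(lra)). intros v Hv Hvb.
    change (Rabs (v - b) < b - x0) in Hv. apply Rabs_lt_between' in Hv. lra.
  - intros u v -> Hv. exists (RInt f a v). split.
    + apply (RInt_correct (V := R_CompleteNormedModule)), Hex. lra.
    + apply HP. change (Rabs (RInt f a v - L) < eps). apply Rabs_lt_between'.
      assert (RInt f a x0 <= RInt f a v).
      { apply RInt_le_RInt_upper; [lra | apply Hex; lra | intros; apply Hpos; lra]. }
      assert (RInt f a v <= L) by (apply Hub; lra).
      lra.
Qed.

Lemma sin_pq_eq_sin0_pq (p q y : R) : 0 < pi_pq p q -> 0 <= y <= pi_pq p q / 2 ->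
  sin_pq p q y = sin0_pq p q y.
Proof.
  intros Hpi Hy. unfold sin_pq.
  set (P := pi_pq p q) in *.
  assert (Hup : up ((y + P) / (2 * P)) = 1%Z).
  { symmetry; apply tech_up; simpl.
    - apply Rmult_lt_reg_r with (2 * P); [lra |]. field_simplify; lra.
    - apply Rmult_le_reg_r with (2 * P); [lra |]. field_simplify; lra. }
  unfold Int_part. rewrite Hup. simpl.
  replace (y - 2 * P * 0) with y by ring.
  destruct (Rlt_dec y 0); [lra |].
  destruct (Rle_dec y (P / 2)); [reflexivity | lra].
Qed.

Section GeneralizedSine.

Variables p q : R.
Hypothesis q_pos : 0 < q.

Local Notation f := (integrand_pq p q).
Local Notation F := (F_pq p q).

Lemma rpow_lt_1 (t : R) : t < 1 -> rpow t q < 1.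
Proof.
  intros Ht. unfold rpow. destruct (Rlt_dec 0 t); [| lra].
  apply Rpower_lt_1; lra.
Qed.

Lemma continuous_rpow (t : R) : continuous (fun u => rpow u q) t.
Proof.
  destruct (Rtotal_order t 0) as [Ht | [-> | Ht]].
  - apply continuous_ext_loc with (fun _ => 0); [| apply continuous_const].
    apply (filter_imp (fun u => u < 0)); [| exact (open_lt 0 t Ht)].
    intros u Hu. unfold rpow. destruct (Rlt_dec 0 u); [lra | reflexivity].
  - apply continuity_pt_filterlim, continuity_pt_locally. intros eps.
    assert (Hd : 0 < Rpower eps (/ q)) by apply exp_pos.
    exists (mkposreal _ Hd). intros u Hu.
    change (Rabs (u - 0) < Rpower eps (/ q)) in Hu.
    unfold rpow at 2. destruct (Rlt_dec 0 0); [lra |].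
    unfold rpow. destruct (Rlt_dec 0 u) as [Hu0 |].
    + rewrite Rminus_0_r, Rabs_right by (left; apply exp_pos).
      replace (pos eps) with (Rpower (Rpower eps (/ q)) q).
      * apply Rlt_Rpower_l; [lra |]. rewrite Rminus_0_r, Rabs_right in Hu; lra.
      * rewrite Rpower_mult, Rinv_l, Rpower_1 by (destruct eps; simpl; lra). reflexivity.
    + rewrite Rminus_0_r, Rabs_R0. apply cond_pos.
  - apply continuous_ext_loc with (fun u => Rpower u q).
    + apply (filter_imp (fun u => 0 < u)); [| exact (open_gt 0 t Ht)].
      intros u Hu. unfold rpow. destruct (Rlt_dec 0 u); [reflexivity | lra].
    + apply (ex_derive_continuous (V := R_NormedModule)).
      eexists. apply is_derive_Reals, derivable_pt_lim_power, Ht.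
Qed.

Lemma integrand_pq_pos (t : R) : 0 < f t.
Proof. apply exp_pos. Qed.

Lemma continuous_integrand_pq (t : R) : t < 1 -> continuous f t.
Proof.
  intros Ht. unfold integrand_pq.
  apply (continuous_comp (fun u => rpow u q) (fun v => Rpower (1 - v) (- / p))).
  - apply continuous_rpow.
  - apply (ex_derive_continuous (V := R_NormedModule)). unfold Rpower.
    pose proof (rpow_lt_1 t Ht). auto_derive. lra.
Qed.

Lemma ex_RInt_integrand_pq (b : R) : b < 1 -> ex_RInt f 0 b.
Proof.
  intros Hb. apply (ex_RInt_continuous (V := R_CompleteNormedModule)).
  intros t Ht. apply continuous_integrand_pq.
  assert (Rmax 0 b < 1) by (apply Rmax_lub_lt; lra). lra.
Qed.

Lemma F_pq_lt_1 (x : R) : x < 1 -> F x = RInt f 0 x.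
Proof. intros Hx. unfold F_pq. destruct (Rlt_dec x 1); [reflexivity | lra]. Qed.

Lemma F_pq_0 : F 0 = 0.
Proof. rewrite F_pq_lt_1 by lra. apply (RInt_point (V := R_CompleteNormedModule)). Qed.

Lemma is_derive_F_pq (x : R) : x < 1 -> is_derive F x (f x).
Proof.
  intros Hx.
  assert (Hnear : locally x (fun y => y < 1)) by exact (open_lt 1 x Hx).
  apply is_derive_ext_loc with (RInt f 0).
  - apply (filter_imp (fun y => y < 1)); [| exact Hnear].
    intros y Hy. symmetry. apply F_pq_lt_1, Hy.
  - apply is_derive_RInt with 0.
    + apply (filter_imp (fun y => y < 1)); [| exact Hnear].
      intros y Hy. apply RInt_correct, ex_RInt_integrand_pq, Hy.
    + apply continuous_integrand_pq, Hx.
Qed.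

Lemma continuity_pt_F_pq (x : R) : x < 1 -> continuity_pt F x.
Proof.
  intros Hx. apply continuity_pt_filterlim, (ex_derive_continuous (V := R_NormedModule)).
  eexists. apply is_derive_F_pq, Hx.
Qed.

Lemma F_pq_increasing (a b : R) : a < b -> b < 1 -> F a < F b.
Proof.
  intros Hab Hb.
  destruct (MVT_gen F a b f) as [c [_ HF]]; rewrite ?Rmin_left, ?Rmax_right by lra.
  - intros x Hx. apply is_derive_F_pq. lra.
  - intros x Hx. apply continuity_pt_F_pq. lra.
  - pose proof (integrand_pq_pos c). nra.
Qed.

Lemma F_pq_nondecreasing (a b : R) : a <= b -> b < 1 -> F a <= F b.
Proof.
  intros Hab Hb. destruct (Req_dec a b) as [-> |]; [lra |].
  left. apply F_pq_increasing; lra.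
Qed.

Lemma F_pq_1 : F 1 = pi_pq p q / 2.
Proof. unfold F_pq. destruct (Rlt_dec 1 1); [lra | reflexivity]. Qed.

Hypothesis F_pq_le_half_pi : forall b, b < 1 -> F b <= pi_pq p q / 2.

Lemma F_pq_increasing_1 (a b : R) : a < b -> b <= 1 -> F a < F b.
Proof.
  intros Hab Hb. destruct (Req_dec b 1) as [-> |]; [| apply F_pq_increasing; lra].
  rewrite F_pq_1. apply Rlt_le_trans with (F ((a + 1) / 2)).
  - apply F_pq_increasing; lra.
  - apply F_pq_le_half_pi. lra.
Qed.

Lemma F_pq_nondecreasing_1 (a b : R) : a <= b -> b <= 1 -> F a <= F b.
Proof.
  intros Hab Hb. destruct (Req_dec a b) as [-> |]; [lra |].
  left. apply F_pq_increasing_1; lra.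
Qed.

Lemma F_pq_inj (a b : R) : a <= 1 -> b <= 1 -> F a = F b -> a = b.
Proof.
  intros Ha Hb E. destruct (Rtotal_order a b) as [h | [h | h]]; auto.
  - pose proof (F_pq_increasing_1 a b h Hb). lra.
  - pose proof (F_pq_increasing_1 b a h Ha). lra.
Qed.

Lemma pi_pq_pos : 0 < pi_pq p q.
Proof.
  pose proof (F_pq_increasing_1 0 1 Rlt_0_1 (Rle_refl 1)) as H01.
  rewrite F_pq_0, F_pq_1 in H01. lra.
Qed.

Lemma sin_pq_F_pq (y : R) : 0 <= y <= 1 -> sin_pq p q (F y) = y.
Proof.
  intros Hy.
  assert (HFy : 0 <= F y <= pi_pq p q / 2).
  { rewrite <- F_pq_0, <- F_pq_1. split; apply F_pq_nondecreasing_1; lra. }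
  rewrite sin_pq_eq_sin0_pq by (apply pi_pq_pos || exact HFy).
  unfold sin0_pq.
  destruct (epsilon_spec (inhabits 0) (fun x => 0 <= x <= 1 /\ F x = F y))
    as [Hx E]; [exists y; split; auto |].
  apply F_pq_inj; [lra | lra | exact E].
Qed.

Lemma sin_pq_range (c x : R) : c < 1 -> 0 <= x <= F c ->
  0 <= sin_pq p q x <= c /\ F (sin_pq p q x) = x.
Proof.
  intros Hc Hx.
  assert (Hc0 : 0 <= c).
  { destruct (Rle_dec 0 c) as [| Hc0]; [assumption |].
    pose proof (F_pq_increasing c 0 ltac:(lra) Rlt_0_1). rewrite F_pq_0 in *. lra. }
  destruct (IVT_interv_le F 0 c x) as [y [Hy <-]].
  - exact Hc0.
  - intros t Ht. apply continuity_pt_F_pq. lra.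
  - rewrite F_pq_0. exact Hx.
  - rewrite sin_pq_F_pq by lra. auto.
Qed.

Lemma is_derive_sin_pq (c x : R) : c < 1 -> 0 < x < F c ->
  is_derive (sin_pq p q) x (/ f (sin_pq p q x)).
Proof.
  intros Hc Hx. set (g := sin_pq p q).
  assert (Hg : forall u, 0 <= u <= F c -> 0 <= g u <= c /\ F (g u) = u)
    by (intros u Hu; apply sin_pq_range; lra).
  assert (Hc0 : 0 < c).
  { destruct (Hg (F c) ltac:(lra)) as [? _].
    destruct (Req_dec c 0) as [E |]; [rewrite E, F_pq_0 in Hx |]; lra. }
  assert (g0 : g 0 = 0) by (rewrite <- F_pq_0 at 1; apply sin_pq_F_pq; lra).
  assert (gc : g (F c) = c) by (apply sin_pq_F_pq; lra).
  assert (Hcont : continuity_pt g x).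
  { apply (Ranalysis5.continuity_pt_recip_interv F g 0 c Hc0); rewrite ?F_pq_0.
    - intros a b _ Hab Hb. apply F_pq_increasing; lra.
    - intros u Hu1 Hu2. unfold comp, id. apply Hg. lra.
    - intros u Hu1 Hu2. apply Hg. lra.
    - intros a Ha. apply continuity_pt_F_pq. lra.
    - lra. }
  assert (Prf : forall a, g 0 <= a <= g (F c) -> derivable_pt F a).
  { intros a Ha. rewrite g0, gc in Ha.
    exists (f a). apply is_derive_Reals, is_derive_F_pq. lra. }
  assert (Hgx : g 0 <= g x <= g (F c)) by (rewrite g0, gc; apply Hg; lra).
  assert (Hd : derive_pt F (g x) (Prf (g x) Hgx) = f (g x)).
  { apply derive_pt_eq_0, is_derive_Reals, is_derive_F_pq.
    destruct (Hg x) as [? _]; lra. }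
  pose proof (Ranalysis5.derivable_pt_lim_recip_interv F g 0 (F c) x Prf Hcont
    ltac:(lra) ltac:(lra) Hgx) as D.
  rewrite Hd in D. apply is_derive_Reals.
  replace (/ f (g x)) with (1 / f (g x)) by (unfold Rdiv; ring).
  apply D.
  - intros u Hu. apply Hg, Hu.
  - apply Rgt_not_eq, integrand_pq_pos.
Qed.

Lemma cos_pq_eq (c x : R) : c < 1 -> 0 < x < F c ->
  cos_pq p q x = Rpower (1 - rpow (sin_pq p q x) q) (/ p).
Proof.
  intros Hc Hx. unfold cos_pq.
  rewrite (is_derive_unique _ _ _ (is_derive_sin_pq c x Hc Hx)).
  unfold integrand_pq. rewrite Rpower_Ropp, Rinv_inv. reflexivity.
Qed.

End GeneralizedSine.

Lemma Rpower_pow_inv6 (t : R) : 0 < t -> Rpower (t ^ 6) (1 / 6) = t.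
Proof.
  intros Ht. rewrite <- (Rpower_pow 6 t Ht), Rpower_mult.
  replace (INR 6 * (1 / 6)) with 1 by (simpl; field). apply Rpower_1, Ht.
Qed.

Lemma pow6_Rpower_inv6 (a : R) : 0 < a -> Rpower a (1 / 6) ^ 6 = a.
Proof.
  intros Ha. rewrite <- (Rpower_pow 6 (Rpower a (1 / 6)) (exp_pos _)), Rpower_mult.
  replace (1 / 6 * INR 6) with 1 by (simpl; field). apply Rpower_1, Ha.
Qed.

Lemma pow6_nonneg (t : R) : 0 <= t ^ 6.
Proof. replace (t ^ 6) with ((t ^ 3) ^ 2) by ring. apply pow2_ge_0. Qed.

Lemma rpow_pow6 (t : R) : 0 <= t -> rpow t 6 = t ^ 6.
Proof.
  intros Ht. unfold rpow. destruct (Rlt_dec 0 t).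
  - replace 6 with (INR 6) at 1 by (simpl; ring). apply Rpower_pow. lra.
  - replace t with 0 by lra. ring.
Qed.

Definition disc (t : R) : R := 1 + 32 * t ^ 6 * (1 - t ^ 6).
Definition root_disc (t : R) : R := sqrt (disc t).
Definition doubling6_of (w : R) : R := (w - 1) * (w + 3) ^ 3 / (16 * w ^ 3).
Definition doubling6 (t : R) : R := doubling6_of (root_disc t).
Definition doubling_ratio (t : R) : R :=
  2 * (1 - t ^ 6) * (root_disc t + 3) ^ 3 / (root_disc t ^ 3 * (1 + root_disc t)).
(* [doubling (sin x) = sin (2 x)], and [doubling t ^ 6 = doubling6 t]; the factor [t] is kept
   outside the root so that [doubling] is smooth at [0]. *)
Definition doubling (t : R) : R := t * Rpower (doubling_ratio t) (1 / 6).
Definition doubling_slope (t : R) : R := 2 * t * (1 - 2 * t ^ 6) / root_disc t.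
Definition root6_half : R := Rpower (1 / 2) (1 / 6).

Lemma disc_ge_1 (t : R) : t ^ 6 < 1 -> 1 <= disc t.
Proof. intros Ht. unfold disc. pose proof (pow6_nonneg t). nra. Qed.

Lemma root_disc_sqr (t : R) : t ^ 6 < 1 -> root_disc t * root_disc t = disc t.
Proof. intros Ht. apply sqrt_sqrt. pose proof (disc_ge_1 t Ht). lra. Qed.

Lemma root_disc_ge_1 (t : R) : t ^ 6 < 1 -> 1 <= root_disc t.
Proof.
  intros Ht. pose proof (root_disc_sqr t Ht). pose proof (disc_ge_1 t Ht).
  pose proof (sqrt_pos (disc t)). fold (root_disc t) in *. nra.
Qed.

Lemma doubling_ratio_pos (t : R) : t ^ 6 < 1 -> 0 < doubling_ratio t.
Proof.
  intros Ht. pose proof (root_disc_ge_1 t Ht). unfold doubling_ratio.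
  apply Rdiv_lt_0_compat.
  - apply Rmult_lt_0_compat; [lra | apply pow_lt; lra].
  - apply Rmult_lt_0_compat; [apply pow_lt |]; lra.
Qed.

Lemma doubling6_eq (t : R) : t ^ 6 < 1 -> doubling6 t = t ^ 6 * doubling_ratio t.
Proof.
  intros Ht. pose proof (root_disc_ge_1 t Ht). pose proof (root_disc_sqr t Ht).
  unfold doubling6, doubling6_of, doubling_ratio, disc in *. set (w := root_disc t) in *.
  replace (w - 1) with (32 * t ^ 6 * (1 - t ^ 6) / (1 + w)); [field; lra |].
  replace (32 * t ^ 6 * (1 - t ^ 6)) with (w * w - 1) by lra. field. lra.
Qed.

Lemma doubling_eq_Rpower (t : R) : 0 < t -> t ^ 6 < 1 ->
  doubling t = Rpower (doubling6 t) (1 / 6).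
Proof.
  intros Ht0 Ht. rewrite doubling6_eq, <- Rpower_mult_distr, Rpower_pow_inv6 by
    (auto using pow_lt, doubling_ratio_pos). reflexivity.
Qed.

Lemma is_derive_doubling6_of (w : R) : 0 < w ->
  is_derive doubling6_of w ((9 - w * w) ^ 2 / (16 * w ^ 4)).
Proof.
  intros Hw. unfold doubling6_of. auto_derive.
  - apply Rgt_not_eq. simpl. repeat apply Rmult_lt_0_compat; lra.
  - field. lra.
Qed.

Lemma is_derive_root_disc (t : R) : t ^ 6 < 1 ->
  is_derive root_disc t (96 * t ^ 5 * (1 - 2 * t ^ 6) / root_disc t).
Proof.
  intros Ht. pose proof (disc_ge_1 t Ht). pose proof (root_disc_ge_1 t Ht).
  unfold root_disc, disc in *. auto_derive.
  - simpl in *. lra.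
  - simpl in *. set (w := sqrt _) in *. field. lra.
Qed.

(* Both identities rest on [9 - root_disc t ^ 2 = 8 (1 - 2 t^6)^2]. *)
Lemma is_derive_doubling6 (t : R) : t ^ 6 < 1 ->
  is_derive doubling6 t (12 * doubling_slope t ^ 5).
Proof.
  intros Ht. pose proof (root_disc_ge_1 t Ht). pose proof (root_disc_sqr t Ht) as Hsq.
  replace (12 * doubling_slope t ^ 5) with
    (96 * t ^ 5 * (1 - 2 * t ^ 6) / root_disc t
     * ((9 - root_disc t * root_disc t) ^ 2 / (16 * root_disc t ^ 4))).
  - apply (is_derive_comp (V := R_NormedModule) doubling6_of root_disc t).
    + apply is_derive_doubling6_of. lra.
    + apply is_derive_root_disc, Ht.
  - rewrite Hsq. unfold doubling_slope, disc. field. lra.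
Qed.

Lemma doubling6_complement (t : R) : t ^ 6 < 1 ->
  doubling6 t * (1 - doubling6 t) = (1 - t ^ 6) * doubling_slope t ^ 6.
Proof.
  intros Ht. pose proof (root_disc_ge_1 t Ht). pose proof (root_disc_sqr t Ht) as Hsq.
  unfold doubling6, doubling6_of, doubling_slope. set (w := root_disc t) in *.
  transitivity ((w * w - 1) * (9 - w * w) ^ 3 / (256 * w ^ 6)); [field; lra |].
  rewrite Hsq. unfold disc. field. lra.
Qed.

Lemma root6_half_pos : 0 < root6_half.
Proof. apply exp_pos. Qed.

Lemma root6_half_pow6 : root6_half ^ 6 = 1 / 2.
Proof. apply pow6_Rpower_inv6. lra. Qed.

Lemma root6_half_lt_1 : root6_half < 1.
Proof. apply Rpower_lt_1; lra. Qed.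

Lemma pow6_lt_half (t : R) : 0 <= t < root6_half -> t ^ 6 < 1 / 2.
Proof.
  intros Ht. rewrite <- root6_half_pow6. apply pow_lt_compat; [exact Ht | auto with arith].
Qed.

Lemma root_disc_root6_half : root_disc root6_half = 3.
Proof.
  unfold root_disc, disc. rewrite root6_half_pow6.
  replace (1 + 32 * (1 / 2) * (1 - 1 / 2)) with (3 * 3) by field. apply sqrt_square. lra.
Qed.

Lemma root_disc_bounds (t : R) : 0 < t < root6_half -> 1 < root_disc t < 3.
Proof.
  intros Ht. pose proof (pow6_lt_half t ltac:(lra)).
  assert (0 < t ^ 6) by (apply pow_lt; lra).
  pose proof (root_disc_sqr t ltac:(lra)). pose proof (root_disc_ge_1 t ltac:(lra)).
  unfold disc in *. split; nra.
Qed.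

Lemma doubling_slope_pos (t : R) : 0 < t < root6_half -> 0 < doubling_slope t.
Proof.
  intros Ht. pose proof (pow6_lt_half t ltac:(lra)). pose proof (root_disc_bounds t Ht).
  unfold doubling_slope. apply Rdiv_lt_0_compat; [apply Rmult_lt_0_compat |]; lra.
Qed.

Lemma doubling6_bounds (t : R) : 0 < t < root6_half -> 0 < doubling6 t < 1.
Proof.
  intros Ht. pose proof (pow6_lt_half t ltac:(lra)). pose proof (root_disc_bounds t Ht).
  assert (Hpos : 0 < doubling6 t).
  { unfold doubling6, doubling6_of. apply Rdiv_lt_0_compat.
    - apply Rmult_lt_0_compat; [| apply pow_lt]; lra.
    - apply Rmult_lt_0_compat; [| apply pow_lt]; lra. }
  split; [exact Hpos |].
  pose proof (doubling6_complement t ltac:(lra)).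
  assert (0 < (1 - t ^ 6) * doubling_slope t ^ 6).
  { apply Rmult_lt_0_compat; [lra | apply pow_lt, doubling_slope_pos, Ht]. }
  nra.
Qed.

Lemma doubling_0 : doubling 0 = 0.
Proof. unfold doubling. ring. Qed.

Lemma doubling_root6_half : doubling root6_half = 1.
Proof.
  unfold doubling, doubling_ratio. rewrite root_disc_root6_half, root6_half_pow6.
  replace (2 * (1 - 1 / 2) * (3 + 3) ^ 3 / (3 ^ 3 * (1 + 3))) with 2 by field.
  unfold root6_half. rewrite Rpower_mult_distr by lra.
  replace (1 / 2 * 2) with 1 by field. apply Rpower_1_l.
Qed.

Lemma doubling_bounds (t : R) : 0 <= t < root6_half -> 0 <= doubling t < 1.
Proof.
  intros Ht. destruct (Req_dec t 0) as [-> |]; [rewrite doubling_0; lra |].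
  pose proof (doubling6_bounds t ltac:(lra)). pose proof (pow6_lt_half t Ht).
  rewrite doubling_eq_Rpower by lra. split; [left; apply exp_pos |].
  apply Rpower_lt_1; lra.
Qed.

Lemma continuity_pt_doubling (t : R) : t ^ 6 < 1 -> continuity_pt doubling t.
Proof.
  intros Ht. apply continuity_pt_filterlim, (ex_derive_continuous (V := R_NormedModule)).
  pose proof (root_disc_ge_1 t Ht). pose proof (doubling_ratio_pos t Ht).
  pose proof (disc_ge_1 t Ht).
  unfold doubling, Rpower, doubling_ratio, root_disc, disc in *.
  auto_derive. simpl in *. set (w := sqrt _) in *.
  assert (0 < w * (w * (w * 1)) * (1 + w)) by (repeat apply Rmult_lt_0_compat; lra).
  repeat split; lra.
Qed.

Lemma is_derive_doubling (t : R) : 0 < t < root6_half ->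
  is_derive doubling t (2 * doubling_slope t ^ 5 * Rpower (doubling6 t) (- (5 / 6))).
Proof.
  intros Ht. pose proof (doubling6_bounds t Ht). pose proof root6_half_lt_1.
  apply is_derive_ext_loc with (fun u => Rpower (doubling6 u) (1 / 6)).
  - apply (filter_imp (fun u => 0 < u < 1)).
    + intros u Hu. symmetry. apply doubling_eq_Rpower; [lra |].
      apply pow_lt_1_compat; [lra | auto with arith].
    + apply filter_and; [apply (open_gt 0) | apply (open_lt 1)]; lra.
  - replace (2 * doubling_slope t ^ 5 * Rpower (doubling6 t) (- (5 / 6))) with
      (scal (12 * doubling_slope t ^ 5) (1 / 6 * Rpower (doubling6 t) (1 / 6 - 1))).
    + apply (is_derive_comp (V := R_NormedModule) (fun v => Rpower v (1 / 6)) doubling6 t).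
      * apply is_derive_Reals, derivable_pt_lim_power. lra.
      * apply is_derive_doubling6. pose proof (pow6_lt_half t ltac:(lra)). lra.
    + unfold scal; simpl; unfold mult; simpl.
      replace (1 / 6 - 1) with (- (5 / 6)) by field. field.
Qed.

Lemma doubling_closed_form (y : R) : 0 < y -> y ^ 6 < 1 ->
  let c := Rpower (1 - y ^ 6) (5 / 6) in
  let D := 1 + 32 * y ^ 6 * Rpower c (6 / 5) in
  Rpower 2 (1 / 6) * y * Rpower c (1 / 5) * Rpower (3 + sqrt D) (1 / 2)
    / (Rpower D (1 / 4) * Rpower (1 + sqrt D) (1 / 6)) = doubling y.
Proof.
  intros Hy0 Hy1 c D.
  assert (HD : D = disc y).
  { unfold D, c, disc. rewrite Rpower_mult. replace (5 / 6 * (6 / 5)) with 1 by field.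
    rewrite Rpower_1 by lra. reflexivity. }
  assert (Hc : Rpower c (1 / 5) = Rpower (1 - y ^ 6) (1 / 6)).
  { unfold c. rewrite Rpower_mult. f_equal. field. }
  rewrite Hc, HD. fold (root_disc y).
  pose proof (root_disc_ge_1 y Hy1) as Hw. pose proof (root_disc_sqr y Hy1) as Hsq.
  pose proof (doubling_ratio_pos y Hy1) as Hr.
  set (w := root_disc y) in *.
  assert (ln_ratio : ln (doubling_ratio y)
    = ln 2 + ln (1 - y ^ 6) + 3 * ln (3 + w) - (3 * ln w + ln (1 + w))).
  { unfold doubling_ratio. fold w. unfold Rdiv.
    rewrite ln_mult, ln_Rinv, ln_mult, ln_mult, ln_pow, ln_mult, ln_pow;
      try lra; try apply pow_lt; try apply Rinv_0_lt_compat;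
      repeat apply Rmult_lt_0_compat; try apply pow_lt; try lra.
    rewrite (Rplus_comm w 3). simpl INR. ring. }
  assert (ln_disc : ln (disc y) = 2 * ln w) by (rewrite <- Hsq, ln_mult by lra; ring).
  unfold doubling, Rpower. rewrite ln_ratio, ln_disc.
  transitivity (y * exp (1 / 6 * ln 2 + 1 / 6 * ln (1 - y ^ 6) + 1 / 2 * ln (3 + w)
                  + - (1 / 4 * (2 * ln w)) + - (1 / 6 * ln (1 + w)))).
  - rewrite !exp_plus, !exp_Ropp. field. split; apply Rgt_not_eq, exp_pos.
  - do 2 f_equal. field.
Qed.

Section Duplication.

Local Notation f := (integrand_pq (6 / 5) 6).
Local Notation F := (F_pq (6 / 5) 6).

Let six_pos : 0 < 6.
Proof. lra. Qed.

Lemma integrand_65_6 (t : R) : 0 <= t -> f t = Rpower (1 - t ^ 6) (- (5 / 6)).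
Proof. intros Ht. unfold integrand_pq. rewrite rpow_pow6 by exact Ht. f_equal. field. Qed.

Lemma doubling_transports_integrand (t : R) : 0 < t < root6_half ->
  2 * doubling_slope t ^ 5 * Rpower (doubling6 t) (- (5 / 6)) * f (doubling t) = 2 * f t.
Proof.
  intros Ht. pose proof (doubling6_bounds t Ht) as HH. pose proof (doubling_slope_pos t Ht).
  pose proof (pow6_lt_half t ltac:(lra)). pose proof (doubling_bounds t ltac:(lra)).
  rewrite !integrand_65_6 by lra.
  rewrite doubling_eq_Rpower, pow6_Rpower_inv6 by lra.
  rewrite Rmult_assoc, Rpower_mult_distr, doubling6_complement by lra.
  rewrite <- Rpower_mult_distr by (try apply pow_lt; lra).
  rewrite <- (Rpower_pow 6 (doubling_slope t)), Rpower_mult by lra.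
  replace (INR 6 * - (5 / 6)) with (- INR 5) by (simpl; field).
  rewrite (Rpower_Ropp (doubling_slope t)), Rpower_pow by lra. field. lra.
Qed.

Lemma is_derive_F_doubling (t : R) : 0 < t < root6_half ->
  is_derive (fun u => F (doubling u)) t (2 * f t).
Proof.
  intros Ht. rewrite <- doubling_transports_integrand by exact Ht.
  apply (is_derive_comp (V := R_NormedModule) F doubling t).
  - apply (is_derive_F_pq _ _ six_pos). apply doubling_bounds. lra.
  - apply is_derive_doubling, Ht.
Qed.

Lemma F_doubling_lt (s : R) : 0 <= s < root6_half -> F (doubling s) = 2 * F s.
Proof.
  intros Hs. pose proof root6_half_lt_1.
  enough (E : F (doubling s) - 2 * F s = F (doubling 0) - 2 * F 0)
    by (rewrite doubling_0, F_pq_0 in E; lra).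
  apply (constant_of_is_derive_0 (fun u => F (doubling u) - 2 * F u)); [lra | |].
  - intros t Ht.
    replace 0 with (minus (2 * f t) (2 * f t)) by (unfold minus, plus, opp; simpl; ring).
    apply (is_derive_minus (V := R_NormedModule)).
    + apply is_derive_F_doubling. lra.
    + apply is_derive_scal, (is_derive_F_pq _ _ six_pos). lra.
  - intros t Ht. assert (t ^ 6 < 1) by (apply pow_lt_1_compat; [lra | auto with arith]).
    apply continuity_pt_minus.
    + apply (continuity_pt_comp doubling F); [apply continuity_pt_doubling; lra |].
      apply (continuity_pt_F_pq _ _ six_pos).
      apply doubling_bounds. lra.
    + apply (continuity_pt_scal F 2), (continuity_pt_F_pq _ _ six_pos). lra.
Qed.

Lemma F_root6_half_pos : 0 < F root6_half.
Proof.
  rewrite <- (F_pq_0 (6 / 5) 6).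
  apply (F_pq_increasing _ _ six_pos); [apply root6_half_pos | apply root6_half_lt_1].
Qed.

Lemma F_le_twice_F_root6_half (b : R) : b < 1 -> F b <= 2 * F root6_half.
Proof.
  intros Hb. pose proof F_root6_half_pos. pose proof root6_half_lt_1. pose proof root6_half_pos.
  destruct (Rle_dec b 0) as [Hb0 | Hb0].
  - pose proof (F_pq_nondecreasing (6 / 5) 6 six_pos b 0 Hb0 Rlt_0_1). rewrite F_pq_0 in *. lra.
  - destruct (IVT_interv_le doubling 0 root6_half b) as [s [Hs <-]].
    + lra.
    + intros t Ht. apply continuity_pt_doubling, pow_lt_1_compat; [lra | auto with arith].
    + rewrite doubling_0, doubling_root6_half. lra.
    + assert (s <> root6_half) by (intros ->; rewrite doubling_root6_half in Hb; lra).
      rewrite F_doubling_lt by lra.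
      apply Rmult_le_compat_l; [lra |]. apply (F_pq_nondecreasing _ _ six_pos); lra.
Qed.

Lemma is_RInt_gen_integrand_65_6 :
  is_RInt_gen f (at_point 0) (at_left 1) (2 * F root6_half).
Proof.
  pose proof root6_half_pos. pose proof root6_half_lt_1 as Hr1.
  apply is_RInt_gen_at_left_of_sup.
  - intros x Hx. apply (ex_RInt_integrand_pq _ _ six_pos). lra.
  - intros t _. left. apply integrand_pq_pos.
  - intros x Hx. rewrite <- F_pq_lt_1 by lra. apply F_le_twice_F_root6_half. lra.
  - intros eps.
    assert (Hc := continuity_pt_F_pq (6 / 5) 6 six_pos root6_half Hr1).
    rewrite continuity_pt_locally in Hc.
    destruct (Hc (mkposreal (eps / 2) ltac:(destruct eps; simpl; lra))) as [d Hd].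
    pose proof (cond_pos d).
    set (s := Rmax 0 (root6_half - d / 2)).
    assert (Hs : 0 <= s < root6_half) by (split; [apply Rmax_l | apply Rmax_lub_lt; lra]).
    assert (Hclose : Rabs (F s - F root6_half) < eps / 2).
    { apply Hd. change (Rabs (s - root6_half) < d). apply Rabs_lt_between'.
      assert (root6_half - d / 2 <= s) by apply Rmax_r. lra. }
    apply Rabs_lt_between' in Hclose.
    exists (doubling s). pose proof (doubling_bounds s Hs). split; [lra |].
    rewrite <- F_pq_lt_1, F_doubling_lt by lra. simpl in Hclose. lra.
Qed.

Lemma pi_65_6 : pi_pq (6 / 5) 6 = 4 * F root6_half.
Proof.
  unfold pi_pq.
  rewrite (is_RInt_gen_unique (V := R_CompleteNormedModule) (Fa := at_point 0)
    (Fb := at_left 1) _ _ is_RInt_gen_integrand_65_6).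
  ring.
Qed.

Lemma F_pq_le_half_pi_65_6 (b : R) : b < 1 -> F b <= pi_pq (6 / 5) 6 / 2.
Proof. intros Hb. rewrite pi_65_6. pose proof (F_le_twice_F_root6_half b Hb). lra. Qed.

Lemma F_doubling (s : R) : 0 <= s <= root6_half -> F (doubling s) = 2 * F s.
Proof.
  intros Hs. destruct (Req_dec s root6_half) as [-> |]; [| apply F_doubling_lt; lra].
  rewrite doubling_root6_half, F_pq_1, pi_65_6. field.
Qed.

Lemma sin_pq_65_6_range (x : R) : 0 <= x <= F root6_half ->
  0 <= sin_pq (6 / 5) 6 x <= root6_half /\ F (sin_pq (6 / 5) 6 x) = x.
Proof.
  apply sin_pq_range; [exact six_pos | exact F_pq_le_half_pi_65_6 | exact root6_half_lt_1].
Qed.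

Lemma sin_pq_65_6_twice (x : R) : 0 <= x <= F root6_half ->
  sin_pq (6 / 5) 6 (2 * x) = doubling (sin_pq (6 / 5) 6 x).
Proof.
  intros Hx. destruct (sin_pq_65_6_range x Hx) as [Hs HFs].
  rewrite <- HFs at 1. rewrite <- F_doubling by exact Hs.
  apply (sin_pq_F_pq _ _ six_pos F_pq_le_half_pi_65_6).
  destruct (Req_dec (sin_pq (6 / 5) 6 x) root6_half) as [-> |].
  - rewrite doubling_root6_half. lra.
  - pose proof (doubling_bounds (sin_pq (6 / 5) 6 x) ltac:(lra)). lra.
Qed.

Lemma cos_pq_65_6 (x : R) : 0 <= x <= F root6_half -> 0 < sin_pq (6 / 5) 6 x ->
  cos_pq (6 / 5) 6 x = Rpower (1 - sin_pq (6 / 5) 6 x ^ 6) (5 / 6).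
Proof.
  intros Hx Hs. pose proof root6_half_lt_1.
  destruct (sin_pq_65_6_range x Hx) as [Hs1 HFs].
  assert (Hx0 : 0 < x).
  { rewrite <- HFs, <- (F_pq_0 (6 / 5) 6). apply (F_pq_increasing _ _ six_pos); lra. }
  rewrite (cos_pq_eq _ _ six_pos F_pq_le_half_pi_65_6 ((root6_half + 1) / 2) x).
  - rewrite rpow_pow6 by lra. f_equal. field.
  - lra.
  - split; [exact Hx0 |]. apply Rle_lt_trans with (F root6_half); [lra |].
    apply (F_pq_increasing _ _ six_pos); lra.
Qed.

End Duplication.

Theorem theorem1p1 :
  forall x : R, 0 <= x <= pi_pq (6/5) 6 / 4 ->
  let s := sin_pq (6/5) 6 x in
  let c := cos_pq (6/5) 6 x in
  let D := 1 + 32 * s ^ 6 * Rpower c (6/5) in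
  sin_pq (6/5) 6 (2 * x) =
    Rpower 2 (1/6) * s * Rpower c (1/5) * Rpower (3 + sqrt D) (1/2)
    / (Rpower D (1/4) * Rpower (1 + sqrt D) (1/6)).
Proof.
  intros x Hx. cbv zeta. rewrite pi_65_6 in Hx.
  assert (Hx' : 0 <= x <= F_pq (6 / 5) 6 root6_half) by lra.
  destruct (sin_pq_65_6_range x Hx') as [Hs _].
  rewrite sin_pq_65_6_twice by exact Hx'.
  destruct (Req_dec (sin_pq (6 / 5) 6 x) 0) as [Hs0 | Hs0].
  - rewrite Hs0, doubling_0. unfold Rdiv. ring.
  - rewrite cos_pq_65_6 by (exact Hx' || lra).
    symmetry. apply doubling_closed_form; [lra |].
    apply pow_lt_1_compat; [pose proof root6_half_lt_1; lra | auto with arith].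
Qed.
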